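(* For every $h\in[H]$, with $\kappa=1/K$ and some $\beta=O(L/K)$, there is a matrix $A\in\mathbb R^{|\mathcal M|\times|\mathcal M|}$ (indexed by models) with $\frac1K\mathcal E_B(M,M',h)\le A(M,M')\le\mathcal W_F(M,M',h)$ for all $M,M'\in\mathcal M$ and $\mathrm{rank}(A,\beta)\le L_h/|\mathcal O|$; that is, the witness rank defined with $\mathcal W_F$ satisfies $\mathsf W(1/K,\beta,\mathcal M,\mathcal F,h)\le L_h/|\mathcal O|$.
   Context: Factored MDP setting: $\mathcal O$ finite, $\mathcal X=[H]\times\mathcal O^d$ layered by time, $|\mathcal A|=K$; known parent sets $\mathrm{pa}_i\subseteq[d]$; transitions $P(x'|x,a)=\prod_{i=1}^dP^{(i)}[x'[i]\mid x[\mathrm{pa}_i],a,h]$; known reward $R^\star$ shared by all models, rewards in $[0,1]$ with total reward $\le1$; $\mathcal M$ is the set of all models with reward $R^\star$ and transitions factorizing with these parents, true model $M^\star\in\mathcal M$. $L=\sum_{i=1}^dHK|\mathcal O|^{1+|\mathrm{pa}_i|}$, $L_h=\sum_{i=1}^dK|\mathcal O|^{1+|\mathrm{pa}_i|}$. For model $M$: $V_M,\pi_M$ its optimal value function and greedy policy; $x_h\sim\pi$ the step-$h$ context running $\pi$ in the true MDP; $(r,x')\sim M_h$: $r\sim R^\star(x_h,a_h),x'\sim P(x_h,a_h)$. $\mathcal E_B(M,M',h)=\mathbb E_{x_h\sim\pi_M,a_h\sim\pi_{M'}}[\mathbb E_{M'_h}[r+V_{M'}(x')]-\mathbb E_{M^\star_h}[r+V_{M'}(x')]]$.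 $\mathcal F=\{g_1+\dots+g_d:g_i\in\mathcal G_i\}$, $\mathcal G_i$ all $\{-1,1\}$-valued functions of $(x,a,r,x')$ depending only on $(x[\mathrm{pa}_i],a,h,x'[i])$. $\mathcal W_F(M,M',h)=\max_{f\in\mathcal F}\mathbb E_{x_h\sim\pi_M,a_h\sim U(\mathcal A)}[\mathbb E_{M'_h}f-\mathbb E_{M^\star_h}f]$. For a matrix $B$, $\mathrm{rank}(B,\beta)$ is the least $k$ with $B=UV^\top$, $U,V$ having $k$ columns and $\|u_i\|_2\|v_j\|_2\le\beta$ for all rows $u_i,v_j$. *)

From mathcomp Require Import all_boot all_order all_algebra.
Set Implicit Arguments. Unset Strict Implicit. Unset Printing Implicit Defensive.
Import Order.TTheory GRing.Theory Num.Theory.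
Local Open Scope ring_scope.

Notation obs O d := {ffun 'I_d -> O}.

Section FMDP.
Variables (R : rcfType) (O Act : finType) (H d : nat).

(* A transition model: M h i x a o = P^(i)[ x'[i] = o | x, a, h ]
   (dependence on x only through x[pa_i] is imposed by [is_model]). *)
Definition model := 'I_H -> 'I_d -> obs O d -> Act -> O -> R.

Definition policy := 'I_H -> obs O d -> Act.

Variable pa : 'I_d -> {set 'I_d}.

Definition agree_on (i : 'I_d) (x x' : obs O d) : bool :=
  [forall j in pa i, x j == x' j].

Definition is_model (M : model) : Prop :=
  (forall h i x a o, 0 <= M h i x a o) /\
  (forall h i x a, \sum_(o : O) M h i x a o = 1) /\
  (forall h i x x' a o, agree_on i x x' -> M h i x a o = M h i x' a o).

Definition K : nat := #|Act|.
Definition L : nat := (\sum_(i < d) H * K * #|O| ^ (1 + #|pa i|))%N.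
Definition Lh : nat := (\sum_(i < d) K * #|O| ^ (1 + #|pa i|))%N.

(* known reward (mean reward R*(x,a)), shared by all models *)
Variable Rs : 'I_H -> obs O d -> Act -> R.

Definition reward_ok : Prop :=
  (forall h x a, 0 <= Rs h x a <= 1) /\
  (forall (xs : 'I_H -> obs O d) (acts : 'I_H -> Act),
      \sum_(h < H) Rs h (xs h) (acts h) <= 1).

Definition Pfull (M : model) (h : 'I_H) (x : obs O d) (a : Act) (y : obs O d) : R :=
  \prod_(i < d) M h i x a (y i).

(* optimal value, by backward induction; layer H is terminal (value 0) *)
Fixpoint Vaux (M : model) (f h : nat) (x : obs O d) : R :=
  match f with
  | 0 => 0
  | f'.+1 =>
    match insub h : option 'I_H with
    | Some hh => \big[Num.max/0]_(a : Act)
                   (Rs hh x a + \sum_(y : obs O d) Pfull M hh x a y * Vaux M f' h.+1 y)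
    | None => 0
    end
  end.

Definition V (M : model) (h : nat) (x : obs O d) : R := Vaux M (H - h) h x.

Definition Q (M : model) (h : 'I_H) (x : obs O d) (a : Act) : R :=
  Rs h x a + \sum_(y : obs O d) Pfull M h x a y * V M h.+1 y.

Definition greedy (pi : model -> policy) : Prop :=
  forall M, is_model M -> forall h x a, Q M h x a <= Q M h x (pi M h x).

Variables (Mstar : model) (d0 : obs O d -> R).

Definition init_ok : Prop :=
  (forall x, 0 <= d0 x) /\ \sum_(x : obs O d) d0 x = 1.

Fixpoint rollin (p : policy) (n : nat) (y : obs O d) : R :=
  match n with
  | 0 => d0 y
  | n'.+1 =>
    match insub n' : option 'I_H with
    | Some hh => \sum_(x : obs O d) rollin p n' x * Pfull Mstar hh x (p hh x) y
    | None => 0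
    end
  end.

Variable pi : model -> policy.

Definition EB (M M' : model) (h : 'I_H) : R :=
  \sum_(x : obs O d) rollin (pi M) h x *
    (let a := pi M' h x in
     (Rs h x a + \sum_(y : obs O d) Pfull M' h x a y * V M' h.+1 y)
     - (Rs h x a + \sum_(y : obs O d) Pfull Mstar h x a y * V M' h.+1 y)).

(* the class F: f = g_1 + ... + g_d, g_i {-1,1}-valued (encoded by bool),
   g_i a function of (h, x, a, x'[i]) depending on x only through x[pa_i] *)
Definition gfam := {ffun 'I_d -> {ffun ('I_H * obs O d * Act * O) -> bool}}.

Definition inF (g : gfam) : bool :=
  [forall i : 'I_d, forall h : 'I_H, forall x : obs O d, forall x' : obs O d,
     forall a : Act, forall o : O,
       agree_on i x x' ==> (g i (h, x, a, o) == g i (h, x', a, o))].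

Definition fval (g : gfam) (h : 'I_H) (x : obs O d) (a : Act) (y : obs O d) : R :=
  \sum_(i < d) (if g i (h, x, a, y i) then 1 else -1).

Definition gconst : gfam := [ffun _ => [ffun _ => true]].

Definition Ef (M M' : model) (h : 'I_H) (g : gfam) : R :=
  \sum_(x : obs O d) rollin (pi M) h x *
    ((K%:R)^-1 * \sum_(a : Act)
       (\sum_(y : obs O d) Pfull M' h x a y * fval g h x a y
        - \sum_(y : obs O d) Pfull Mstar h x a y * fval g h x a y)).

(* W_F(M, M', h) = max over f in F (gconst is in F, so it is a max over F) *)
Definition WF (M M' : model) (h : 'I_H) : R :=
  \big[Num.max/Ef M M' h gconst]_(g | inF g) Ef M M' h g.

End FMDP.

Definition rank_le (R : rcfType) (T : Type) (P : T -> Prop) (A : T -> T -> R)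
    (beta : R) (k : nat) : Prop :=
  exists k' : nat, (k' <= k)%N /\
  exists (U W : T -> 'I_k' -> R),
    (forall M M', P M -> P M' -> A M M' = \sum_(j < k') U M j * W M' j) /\
    (forall M M', P M -> P M' ->
       Num.sqrt (\sum_(j < k') U M j ^+ 2) * Num.sqrt (\sum_(j < k') W M' j ^+ 2)
       <= beta).

From mathcomp Require Import all_boot all_order all_algebra.
From mathcomp Require Import zify lra.
Set Implicit Arguments.
Unset Strict Implicit.
Unset Printing Implicit Defensive.

Import Order.TTheory GRing.Theory Num.Theory.
Local Open Scope ring_scope.

(* The witness is A(M, M') = E_{x ~ pi_M} [(1/K) sum_a sum_i |M'_i(.|x,a) - M*_i(.|x,a)|_1].
   Values lie in [0, 1] and the L1 distance of two product distributions is at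
   most the sum of the L1 distances of their factors, so A dominates E_B / K.
   The test functions g_i = sign (M'_i - M*_i) only read the parents of factor i,
   and their discrepancy is exactly A, so A <= W_F.  Finally A factors through
   the triples (i, u, a) with u a configuration of pa_i: on the left the
   probability under pi_M that x[pa_i] = u (at most 1), on the right the scaled
   factor distance at (u, a) (at most 2/K).  There are L_h/|O| such triples,
   which gives the rank bound with beta = 2 L/K. *)

Lemma ler_sum_cond (R : numDomainType) (T : finType) (P : pred T) (F : T -> R) :
  (forall i, 0 <= F i) -> \sum_(i | P i) F i <= \sum_i F i.
Proof. by move=> F0; rewrite [leRHS](bigID P) /= lerDl sumr_ge0. Qed.

Lemma sum_prod_marginal (R : comPzSemiRingType) (I O : finType)
    (a : I -> O -> R) (f : O -> R) (i : I) :
  (forall k, \sum_o a k o = 1) ->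
  \sum_(y : {ffun I -> O}) (\prod_k a k (y k)) * f (y i) = \sum_o a i o * f o.
Proof.
move=> a1; pose G k o := if k == i then a k o * f o else a k o.
transitivity (\sum_(y : {ffun I -> O}) \prod_k G k (y k)).
  apply: eq_bigr => y _; rewrite (bigD1 i) //= [RHS](bigD1 i) //= /G eqxx mulrAC.
  by congr (_ * _); apply: eq_bigr => k /negbTE ->.
rewrite -bigA_distr_bigA (bigD1 i) //= [X in _ * X]big1 ?mulr1.
  by apply: eq_bigr => o _; rewrite /G eqxx.
by move=> k /negbTE ki; rewrite /G ki a1.
Qed.

(* Hybrid argument: swap the factors of [a] for those of [b] one at a time. *)
Lemma sum_normr_prodB_le (R : numDomainType) (O : finType) (d : nat)
    (a b : 'I_d -> O -> R) :
  (forall k o, 0 <= a k o) -> (forall k o, 0 <= b k o) ->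
  (forall k, \sum_o a k o = 1) -> (forall k, \sum_o b k o = 1) ->
  \sum_(y : {ffun 'I_d -> O}) `|\prod_k a k (y k) - \prod_k b k (y k)|
    <= \sum_k \sum_o `|a k o - b k o|.
Proof.
move=> a0 b0 a1 b1.
pose c (y : {ffun 'I_d -> O}) (n : nat) :=
  \prod_(k < d) (if (k < n)%N then b k (y k) else a k (y k)).
have telescope (y : {ffun 'I_d -> O}) :
    \prod_k a k (y k) - \prod_k b k (y k) = \sum_(k < d) (c y k - c y k.+1).
  rewrite -(big_mkord xpredT (fun k => c y k - c y k.+1)).
  have -> : \sum_(0 <= k < d) (c y k - c y k.+1) = c y 0 - c y d.
    rewrite -opprB -telescope_sumr // -sumrN.
    by apply: eq_bigr => k _; rewrite opprB.
  by congr (_ - _); apply: eq_bigr => k _; rewrite ?ltn0 ?ltn_ord.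
pose G (k j : 'I_d) (o : O) :=
  if j == k then `|a k o - b k o| else if (j < k)%N then b j o else a j o.
have hybrid_step (y : {ffun 'I_d -> O}) (k : 'I_d) :
    `|c y k - c y k.+1| = \prod_j G k j (y j).
  rewrite /c (bigD1 k) //= [X in _ - X](bigD1 k) //= ltnn ltnSn.
  rewrite [X in _ - _ * X](eq_bigr (fun j : 'I_d =>
    if (j < k)%N then b j (y j) else a j (y j))); last first.
    by move=> j jk; rewrite ltnS leq_eqVlt val_eqE (negbTE jk).
  rewrite -mulrBl [RHS](bigD1 k) //= /G eqxx normrM; congr (_ * _).
  rewrite ger0_norm; last by apply: prodr_ge0 => j _; case: ifP.
  by apply: eq_bigr => j jk; rewrite (negbTE jk).
under eq_bigr do rewrite telescope.
apply: le_trans (ler_sum _ (fun y _ => ler_norm_sum _ _ _)) _.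
rewrite exchange_big /=; apply: ler_sum => k _.
under eq_bigr do rewrite hybrid_step.
rewrite -bigA_distr_bigA (bigD1 k) //= [X in _ * X]big1 ?mulr1.
  by apply: ler_sum => o _; rewrite /G eqxx.
move=> j jk; rewrite (eq_bigr (fun o => if (j < k)%N then b j o else a j o)).
  by case: (j < k)%N.
by move=> o _; rewrite /G (negbTE jk).
Qed.

Lemma sum_mulB_le_l1 (R : realDomainType) (T : finType) (p q v : T -> R) :
  (forall y, `|v y| <= 1) ->
  \sum_y p y * v y - \sum_y q y * v y <= \sum_y `|p y - q y|.
Proof.
move=> v1; rewrite -sumrB; apply: ler_sum => y _; rewrite -mulrBl.
by apply: le_trans (ler_norm _) _; rewrite normrM ler_piMr.
Qed.

Section Value.
Variables (R : rcfType) (O Act : finType) (H d : nat) (pa : 'I_d -> {set 'I_d}).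
Variable Rs : 'I_H -> obs O d -> Act -> R.
Implicit Types (M : model R O Act H d) (h : 'I_H) (x y : obs O d) (a : Act).

Lemma Pfull_ge0 M h x a y : is_model pa M -> 0 <= Pfull M h x a y.
Proof. by case=> M0 _; apply: prodr_ge0. Qed.

Lemma sum_Pfull M h x a : is_model pa M -> \sum_y Pfull M h x a y = 1.
Proof. by case=> _ [M1 _]; rewrite -(bigA_distr_bigA (fun i o => M h i x a o)) big1. Qed.

Lemma V_ge0 M (n : nat) x : 0 <= V Rs M n x.
Proof.
rewrite /V; case: (H - n)%N => [|f] //=.
by case: insub => [hh|] //; apply: bigmax_ge_id.
Qed.

Lemma V_bigmaxQ M h x : V Rs M h x = \big[Num.max/0]_a Q Rs M h x a.
Proof.
rewrite /V (_ : (H - h = (H - h.+1).+1)%N) /=; last by have := ltn_ord h; lia.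
by rewrite valK.
Qed.

Lemma V_eq0 M (n : nat) x : (H <= n)%N -> V Rs M n x = 0.
Proof. by rewrite /V -subn_eq0 => /eqP ->. Qed.

Definition past_reward (xs : 'I_H -> obs O d) (acts : 'I_H -> Act) (n : nat) : R :=
  \sum_(k < H | (k < n)%N) Rs k (xs k) (acts k).

Hypothesis Rok : reward_ok Rs.

Lemma past_reward_ge0 xs acts n : 0 <= past_reward xs acts n.
Proof. by apply: sumr_ge0 => k _; case/andP: (Rok.1 k (xs k) (acts k)). Qed.

Lemma past_reward_le1 xs acts n : past_reward xs acts n <= 1.
Proof.
apply: le_trans (Rok.2 xs acts); apply: ler_sum_cond => k.
by case/andP: (Rok.1 k (xs k) (acts k)).
Qed.

Lemma past_rewardS xs acts h x a :
  past_reward (fun k => if k == h then x else xs k)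
              (fun k => if k == h then a else acts k) h.+1
  = Rs h x a + past_reward xs acts h.
Proof.
rewrite /past_reward (bigD1 h) ?ltnSn //= !eqxx; congr (_ + _).
apply: eq_big => [k|k /andP [_ /negbTE -> //]].
by rewrite ltnS leq_eqVlt val_eqE; case: eqP => [->|_] /=; rewrite ?ltnn ?andbT.
Qed.

(* Strengthened induction hypothesis for [V_le1]: [xs], [acts] is any history. *)
Lemma V_le_remaining M m (n : nat) x xs acts : is_model pa M -> (n + m = H)%N ->
  V Rs M n x <= 1 - past_reward xs acts n.
Proof.
move=> Mm; elim: m n x xs acts => [|m IH] n x xs acts nmH.
  by rewrite V_eq0 ?subr_ge0 ?past_reward_le1 //; lia.
have nH : (n < H)%N by lia.
pose h : 'I_H := Sub n nH; rewrite -[n]/(val h) V_bigmaxQ.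
apply: bigmax_le => [|a _]; first by rewrite subr_ge0 past_reward_le1.
have Vnext y : V Rs M h.+1 y <= 1 - (Rs h x a + past_reward xs acts h).
  by rewrite -past_rewardS; apply: IH; rewrite /= -nmH addSnnS.
rewrite /Q; apply: le_trans (_ : _ <= Rs h x a + \sum_y Pfull M h x a y *
  (1 - (Rs h x a + past_reward xs acts h))) _.
  by rewrite lerD2l; apply: ler_sum => y _; apply: ler_wpM2l; [exact: Pfull_ge0 | exact: Vnext].
rewrite -mulr_suml sum_Pfull // mul1r; lra.
Qed.

Lemma V_le1 M (n : nat) x : (0 < #|Act|)%N -> is_model pa M -> V Rs M n x <= 1.
Proof.
move=> /card_gt0P [a0 _] Mm; have [nH|/ltnW Hn] := leqP n H; last by rewrite V_eq0.
apply: le_trans (V_le_remaining x (fun=> x) (fun=> a0) Mm (subnKC nH)) _.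
by rewrite gerBl past_reward_ge0.
Qed.

End Value.

Lemma rank_le_zero (R : rcfType) (T : Type) (P : T -> Prop) (A : T -> T -> R)
    (beta : R) (k : nat) :
  0 <= beta -> (forall M M', P M -> P M' -> A M M' = 0) -> rank_le P A beta k.
Proof.
move=> beta0 A0; exists 0%N; split => //; exists (fun _ _ => 0), (fun _ _ => 0).
by split=> M M' PM PM'; rewrite ?A0 // !big_ord0 // sqrtr0 mul0r.
Qed.

Lemma sqrt_sum_sqr_le (R : rcfType) (n : nat) (X : 'I_n -> R) (c : R) :
  0 <= c -> (forall j, `|X j| <= c) ->
  Num.sqrt (\sum_j X j ^+ 2) <= Num.sqrt n%:R * c.
Proof.
move=> c0 Xc; rewrite -[c in _ * c]ger0_norm // -sqrtr_sqr -sqrtrM // ler_sqrt.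
  rewrite mulr_natl -[in leRHS](card_ord n) -sumr_const.
  apply: ler_sum => j _; rewrite -real_normK ?num_real // !expr2.
  by apply: ler_pM; rewrite ?normr_ge0.
by rewrite mulr_ge0 ?sqr_ge0.
Qed.

Lemma rank_le_factorization (R : rcfType) (T : Type) (P : T -> Prop)
    (A : T -> T -> R) (J : finType) (U W : T -> J -> R) (a b beta : R) (k : nat) :
  (#|J| <= k)%N -> 0 <= a -> 0 <= b -> #|J|%:R * (a * b) <= beta ->
  (forall M M', P M -> P M' -> A M M' = \sum_j U M j * W M' j) ->
  (forall M j, P M -> `|U M j| <= a) -> (forall M j, P M -> `|W M j| <= b) ->
  rank_le P A beta k.
Proof.
move=> Jk a0 b0 le_beta AUW Ua Wb; exists #|J|; split => //.
exists (fun M i => U M (enum_val i)), (fun M i => W M (enum_val i)).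
split=> [M M' PM PM'|M M' PM PM'].
  by rewrite AUW // -(big_enum_val (fun j => U M j * W M' j)); apply: eq_bigl.
apply: le_trans le_beta.
apply: le_trans (ler_pM (sqrtr_ge0 _) (sqrtr_ge0 _)
  (@sqrt_sum_sqr_le _ _ _ _ a0 (fun j => Ua M _ PM))
  (@sqrt_sum_sqr_le _ _ _ _ b0 (fun j => Wb M' _ PM'))) _.
by rewrite mulrACA -expr2 sqr_sqrtr ?ler0n.
Qed.

Section Witness.
Variables (R : rcfType) (O Act : finType) (H d : nat) (pa : 'I_d -> {set 'I_d}).
Variables (Mstar : model R O Act H d) (d0 : obs O d -> R).
Variable pi : model R O Act H d -> policy O Act H d.
Hypotheses (Msm : is_model pa Mstar) (Iok : init_ok d0).
Implicit Types (M : model R O Act H d) (h : 'I_H) (x y : obs O d) (a : Act).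

Lemma rollin_ge0 p n y : 0 <= rollin Mstar d0 p n y.
Proof.
elim: n y => [|n IH] y /=; first exact: Iok.1.
case: (insub n) => [h|] //; apply: sumr_ge0 => x _.
by rewrite mulr_ge0 // (Pfull_ge0 _ _ _ _ Msm).
Qed.

Lemma sum_rollin_le1 p n : \sum_y rollin Mstar d0 p n y <= 1.
Proof.
elim: n => [|n IH] /=; first by rewrite Iok.2.
case: (insub n) => [h|]; last by rewrite big1 ?ler01.
rewrite exchange_big /=; under eq_bigr do rewrite -mulr_sumr (sum_Pfull _ _ _ Msm) mulr1.
exact: IH.
Qed.

Definition factor_dist M' h i x a : R := \sum_o `|M' h i x a o - Mstar h i x a o|.

Definition witness h M M' : R :=
  \sum_x rollin Mstar d0 (pi M) h x *
    ((K Act)%:R^-1 * \sum_a \sum_i factor_dist M' h i x a).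

Lemma factor_dist_ge0 M' h i x a : 0 <= factor_dist M' h i x a.
Proof. exact: sumr_ge0. Qed.

Lemma factor_dist_le2 M' h i x a : is_model pa M' -> factor_dist M' h i x a <= 2.
Proof.
case=> M'0 [M'1 _]; case: Msm => Ms0 [Ms1 _].
apply: le_trans (_ : _ <= \sum_o (M' h i x a o + Mstar h i x a o)) _.
  by apply: ler_sum => o _; apply: le_trans (ler_normB _ _) _; rewrite !ger0_norm.
by rewrite big_split /= M'1 Ms1.
Qed.

Lemma sum_PfullB_le_factor_dist M' h x a (v : obs O d -> R) :
  is_model pa M' -> (forall y, `|v y| <= 1) ->
  \sum_y Pfull M' h x a y * v y - \sum_y Pfull Mstar h x a y * v y
    <= \sum_i factor_dist M' h i x a.
Proof.
case=> M'0 [M'1 _] v1; case: Msm => Ms0 [Ms1 _].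
apply: le_trans (sum_mulB_le_l1 _ _ v1) _.
exact: sum_normr_prodB_le (fun k => M'0 h k x a) (fun k => Ms0 h k x a)
  (fun k => M'1 h k x a) (fun k => Ms1 h k x a).
Qed.

Lemma EB_le_witness Rs h M M' : (0 < #|Act|)%N -> reward_ok Rs -> is_model pa M' ->
  (K Act)%:R^-1 * EB Rs Mstar d0 pi M M' h <= witness h M M'.
Proof.
move=> Kpos Rok M'm; rewrite /EB /witness mulr_sumr; apply: ler_sum => x _.
rewrite mulrCA ler_wpM2l ?rollin_ge0 // ler_wpM2l ?invr_ge0 ?ler0n //.
rewrite opprD addrACA subrr add0r.
have V1 y : `|V Rs M' h.+1 y| <= 1.
  by rewrite ger0_norm ?V_ge0 // (V_le1 Rok _ _ Kpos M'm).
apply: le_trans (sum_PfullB_le_factor_dist h x (pi M' h x) M'm V1) _.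
rewrite (bigD1 (pi M' h x)) //= lerDl.
by apply: sumr_ge0 => a _; apply: sumr_ge0 => i _; exact: factor_dist_ge0.
Qed.

Definition gsign M' : gfam O Act H d :=
  [ffun i => [ffun p : 'I_H * obs O d * Act * O =>
    Mstar p.1.1.1 i p.1.1.2 p.1.2 p.2 <= M' p.1.1.1 i p.1.1.2 p.1.2 p.2]].

Lemma gsign_inF M' : is_model pa M' -> inF pa (gsign M').
Proof.
case=> _ [_ M'pa]; case: Msm => _ [_ Mspa].
apply/forallP => i; apply/forallP => h; apply/forallP => x; apply/forallP => x'.
apply/forallP => a; apply/forallP => o; apply/implyP => ag.
by rewrite !ffunE /= (M'pa _ _ _ _ _ _ ag) (Mspa _ _ _ _ _ _ ag).
Qed.

Lemma sum_Pfull_fval N g h x a : is_model pa N ->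
  \sum_y Pfull N h x a y * fval R g h x a y
  = \sum_i \sum_o N h i x a o * (if g i (h, x, a, o) then 1 else -1).
Proof.
case=> _ [N1 _]; rewrite /fval; under eq_bigr do rewrite mulr_sumr.
rewrite exchange_big /=; apply: eq_bigr => i _.
exact: sum_prod_marginal (fun o => if g i (h, x, a, o) then 1 else -1) i
  (fun k => N1 h k x a).
Qed.

Lemma Ef_gsign M M' h : is_model pa M' ->
  Ef Mstar d0 pi M M' h (gsign M') = witness h M M'.
Proof.
move=> M'm; rewrite /Ef /witness; apply: eq_bigr => x _.
congr (_ * (_ * _)); apply: eq_bigr => a _.
rewrite !sum_Pfull_fval // -sumrB; apply: eq_bigr => i _.
rewrite -sumrB; apply: eq_bigr => o _; rewrite !ffunE /= -mulrBl.
by case: lerP => _; rewrite ?mulr1 ?mulrN1 ?opprB.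
Qed.

Lemma witness_le_WF M M' h : is_model pa M' ->
  witness h M M' <= WF pa Mstar d0 pi M M' h.
Proof. by move=> M'm; rewrite -Ef_gsign //; apply: le_bigmax_cond; exact: gsign_inF. Qed.

Lemma L_Lh : L O Act H pa = (H * Lh O Act pa)%N.
Proof. by rewrite /L /Lh big_distrr; apply: eq_bigr => i _; rewrite /= mulnA. Qed.

Definition parent_config (i : 'I_d) : finType := {ffun {j : 'I_d | j \in pa i} -> O}.

Definition restrict (i : 'I_d) x : parent_config i := [ffun j => x (val j)].

Definition factor_index : finType := {i : 'I_d & (parent_config i * Act)%type}.

Lemma card_factor_index : (#|O| * #|factor_index|)%N = Lh O Act pa.
Proof.
rewrite card_tagged sumnE big_map big_enum /= big_distrr /Lh /=.
apply: eq_bigr => i _; rewrite card_prod card_ffun card_sig /K.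
have -> : #|[pred j in pa i]| = #|pa i| by apply: eq_card.
by rewrite add1n expnS mulnA mulnC.
Qed.

Definition visit_prob h M (t : factor_index) : R :=
  \sum_(x | restrict (tag t) x == (tagged t).1) rollin Mstar d0 (pi M) h x.

(* The choice of [x] is irrelevant by [factor_dist_restrict]. *)
Definition scaled_dist h M' (t : factor_index) : R :=
  if [pick x | restrict (tag t) x == (tagged t).1] is Some x
  then (K Act)%:R^-1 * factor_dist M' h (tag t) x (tagged t).2 else 0.

Lemma factor_dist_restrict M' h i x x' a : is_model pa M' ->
  restrict i x = restrict i x' -> factor_dist M' h i x a = factor_dist M' h i x' a.
Proof.
case=> _ [_ M'pa]; case: Msm => _ [_ Mspa] /ffunP e.
have ag : agree_on pa i x x'.
  by apply/forallP => j; apply/implyP => jp; move: (e (Sub j jp)); rewrite !ffunE => ->.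
by apply: eq_bigr => o _; rewrite (M'pa _ _ _ _ _ _ ag) (Mspa _ _ _ _ _ _ ag).
Qed.

Lemma witness_factorization h M M' : is_model pa M' ->
  witness h M M' = \sum_t visit_prob h M t * scaled_dist h M' t.
Proof.
move=> M'm.
pose F i (p : (parent_config i * Act)%type) :=
  let t := Tagged (fun i => (parent_config i * Act)%type) p in
  visit_prob h M t * scaled_dist h M' t.
transitivity (\sum_i \sum_(p : (parent_config i * Act)%type) F i p); last first.
  by rewrite (sig_big_dep xpredT (fun _ _ => true) F); apply: eq_big => // -[].
rewrite /witness.
transitivity (\sum_x \sum_i \sum_a
  rollin Mstar d0 (pi M) h x * ((K Act)%:R^-1 * factor_dist M' h i x a)).
  apply: eq_bigr => x _; rewrite exchange_big /= !mulr_sumr.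
  by apply: eq_bigr => i _; rewrite !mulr_sumr.
rewrite exchange_big; apply: eq_bigr => i _ /=.
rewrite -(pair_bigA _ (fun u a => F i (u, a))) /=.
rewrite exchange_big [RHS]exchange_big; apply: eq_bigr => a _ /=.
rewrite (partition_big (restrict i) xpredT) //=; apply: eq_bigr => u _.
rewrite /F /visit_prob /scaled_dist /= mulr_suml; apply: eq_bigr => x /eqP ex.
case: pickP => [x0 /eqP e0|none]; last by have := none x; rewrite ex eqxx.
by rewrite (factor_dist_restrict h a M'm (etrans ex (esym e0))).
Qed.

Lemma witness_rank h : (0 < #|Act|)%N ->
  rank_le (is_model pa) (witness h) (2%:R * ((L O Act H pa)%:R / (K Act)%:R))
    (Lh O Act pa %/ #|O|).
Proof.
move=> Kpos; have Kgt0 : (0 : R) < (K Act)%:R by rewrite ltr0n.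
have [O0|Opos] := posnP #|O|.
  apply: rank_le_zero => [|M M' _ _]; first by rewrite mulr_ge0 ?divr_ge0.
  rewrite /witness big1 // => x _; rewrite big1 ?mulr0 // => a _.
  by rewrite big1 // => i _; rewrite /factor_dist big1 // => o; have := card0_eq O0 o; rewrite inE.
apply: (rank_le_factorization (J := factor_index) (U := visit_prob h)
  (W := scaled_dist h) (a := 1) (b := 2 / (K Act)%:R)) => //.
- by rewrite -card_factor_index mulKn.
- by rewrite divr_ge0 ?ler0n.
- rewrite mul1r mulrC [leRHS]mulrCA [leRHS]mulrC ler_wpM2l ?divr_ge0 // ler_nat.
  rewrite L_Lh -card_factor_index.
  by rewrite mulnA leq_pmull // muln_gt0 Opos (leq_ltn_trans _ (ltn_ord h)).
- by move=> M M' _; apply: witness_factorization.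
- move=> M t _; rewrite ger0_norm; last by apply: sumr_ge0 => x _; exact: rollin_ge0.
  apply: le_trans (sum_rollin_le1 (pi M) h).
  by apply: ler_sum_cond => x; exact: rollin_ge0.
- move=> M' t M'm; rewrite /scaled_dist; case: pickP => [x _|_]; last by rewrite normr0 divr_ge0.
  rewrite ger0_norm ?mulr_ge0 ?invr_ge0 ?ler0n ?factor_dist_ge0 //.
  by rewrite mulrC ler_wpM2r ?invr_ge0 ?ler0n ?factor_dist_le2.
Qed.

End Witness.

Theorem mainTheorem12 :
  exists c : nat,
  forall (R : rcfType) (O Act : finType) (H d : nat) (pa : 'I_d -> {set 'I_d})
         (Rs : 'I_H -> obs O d -> Act -> R) (Mstar : model R O Act H d)
         (d0 : obs O d -> R) (pi : model R O Act H d -> policy O Act H d),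
    (0 < #|Act|)%N ->
    reward_ok Rs ->
    init_ok d0 ->
    is_model pa Mstar ->
    greedy pa Rs pi ->
    forall h : 'I_H,
    exists beta : R,
      beta <= c%:R * ((L O Act H pa)%:R / (K Act)%:R) /\
      exists A : model R O Act H d -> model R O Act H d -> R,
        (forall M M', is_model pa M -> is_model pa M' ->
           (K Act)%:R^-1 * EB Rs Mstar d0 pi M M' h <= A M M' /\
           A M M' <= WF pa Mstar d0 pi M M' h) /\
        rank_le (is_model pa) A beta ((Lh O Act pa) %/ #|O|).
Proof.
exists 2%N => R O Act H d pa Rs Mstar d0 pi Kpos Rok Iok Msm _ h.
exists (2%:R * ((L O Act H pa)%:R / (K Act)%:R)); split=> //.
exists (witness Mstar d0 pi h); split; last exact: (witness_rank pi Msm Iok h Kpos).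
move=> M M' _ M'm; split; first exact: (EB_le_witness pi Msm Iok h M Kpos Rok M'm).
exact: (witness_le_WF d0 pi Msm M h M'm).
Qed.
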